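(* Assume that $\hat F$ is differentiable on $\mathcal F$ and $\|\hat F'(y)-\hat F'(x)\|_F\le L_{\hat F}\|y-x\|$ for all $x,y\in\mathcal F$ (Assumption 1). Let $\{x_k\}$ be generated by Scheme 1 with $\tau_k=\hat f_1(x_k)$ and $\varepsilon_k=\varepsilon\ge 0$ for all $k$. Then for every $k\in\mathbb N$ and every $r>0$: $$\frac{8L_{\hat F}^2}{L}\Big(\varepsilon+\frac{\hat f_1(x_0)-\hat f_1(x_k)}{k}\Big)\ \ge\ \min_{i\in\{0,\dots,k-1\}}\Big\|2L_{\hat F}\big(T_{2L_{\hat F},\hat f_1(x_i)}(x_i)-x_i\big)\Big\|^2,$$ $$L_{\hat F}\Big(\varepsilon+\frac{\hat f_1(x_0)-\hat f_1(x_k)}{k}\Big)\ \ge\ \min_{i\in\{0,\dots,k-1\}} 2(L_{\hat F}r)^2\,\varkappa\!\Big(\frac{\Delta_r(x_i)}{4\hat f_1(x_i)L_{\hat F}r^2}\Big),$$ where $\varkappa(t)=\frac{t^2}{2}$ for $t\in[0,1]$ and $\varkappa(t)=t-\frac12$ for $t>1$.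
   Context: Let $F:\mathbb R^n\to\mathbb R^m$ be a smooth map, $\hat F(x)=\frac{1}{\sqrt m}F(x)$ with Jacobian $\hat F'(x)\in\mathbb R^{m\times n}$. All vector norms are Euclidean, $\|\cdot\|$ on matrices is the spectral norm, $\|\cdot\|_F$ the Frobenius norm. Set $\hat f_1(x)=\|\hat F(x)\|$, $\hat f_2=\hat f_1^2$, $\phi(x,y)=\|\hat F(x)+\hat F'(x)(y-x)\|$, and for $L>0,\tau>0$ the local model $\psi_{x,L,\tau}(y)=\frac{\tau}{2}+\frac{\phi(x,y)^2}{2\tau}+\frac L2\|y-x\|^2$, with $T_{L,\tau}(x)=\arg\min_{y\in\mathbb R^n}\psi_{x,L,\tau}(y)$. For $r>0$, $\Delta_r(x)=\hat f_2(x)-\min_y\{\phi(x,y)^2:\|y-x\|\le r\}$. $\mathcal F\subseteq\mathbb R^n$ is a closed convex set with nonempty interior; level sets are $\mathcal L(v)=\{x:\hat f_1(x)\le v\}$; it is assumed throughout that $\mathcal L(\hat f_1(x_0))\subseteq\mathcal F$ and that $\mathcal F$ is large enough that the whole generated sequence (with nonincreasing $\hat f_1$ values) lies in $\mathcal F$. Scheme 1 (input: $x_0$ with $\mathcal L(\hat f_1(x_0))\subseteq\mathcal F$; a rule choosing $\varepsilon_k\ge0$ and $\tau_k>0$; a constant $L\in(0,L_{\hat F}]$, $L_0=L$). For $k=0,1,\dots$: (1) choose $\tau_k,\varepsilon_k$; (2) compute $x_{k+1}$ with $\psi_{x_k,L_k,\tau_k}(x_{k+1})-\psi_{x_k,L_k,\tau_k}(T_{L_k,\tau_k}(x_k))\le\varepsilon_k$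 and $\hat f_1(x_k)\ge\psi_{x_k,L_k,\tau_k}(x_{k+1})$; (3) if $\hat f_1(x_{k+1})>\psi_{x_k,L_k,\tau_k}(x_{k+1})$, set $L_k:=\min\{2L_k,2L_{\hat F}\}$ and return to (1); (4) set $L_{k+1}=\max\{L_k/2,L\}$. *)

From HB Require Import structures.
From mathcomp Require Import all_boot all_order all_algebra.
From mathcomp Require Import all_classical all_reals all_analysis.
Set Implicit Arguments. Unset Strict Implicit. Unset Printing Implicit Defensive.
Import Order.TTheory GRing.Theory Num.Theory.
Import numFieldNormedType.Exports.
Local Open Scope classical_set_scope.
Local Open Scope ring_scope.

Section Defs.
Variable R : realType.

(* Frobenius norm of a matrix; on row/column vectors this is the Euclidean norm *)
Definition frob (p q : nat) (A : 'M[R]_(p, q)) : R :=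
  Num.sqrt (\sum_(i < p) \sum_(j < q) A i j ^+ 2).

Variables (n m : nat).

Definition Fhat (F : 'rV[R]_n -> 'rV[R]_m) (x : 'rV[R]_n) : 'rV[R]_m :=
  (Num.sqrt (m%:R))^-1 *: F x.

Definition f1 (F : 'rV[R]_n -> 'rV[R]_m) (x : 'rV[R]_n) : R := frob (Fhat F x).

Definition f2 (F : 'rV[R]_n -> 'rV[R]_m) (x : 'rV[R]_n) : R := f1 F x ^+ 2.

(* phi(x,y) = || Fhat(x) + Fhat'(x)(y - x) ||; with row vectors the
   Jacobian 'J acts on the right: v *m 'J f x = 'd f x v. *)
Definition phi (F : 'rV[R]_n -> 'rV[R]_m) (x y : 'rV[R]_n) : R :=
  frob (Fhat F x + (y - x) *m 'J (Fhat F) x).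

Definition psi (F : 'rV[R]_n -> 'rV[R]_m) (x : 'rV[R]_n) (L tau : R)
    (y : 'rV[R]_n) : R :=
  tau / 2 + phi F x y ^+ 2 / (2 * tau) + L / 2 * frob (y - x) ^+ 2.

(* T_{L,tau}(x) = argmin_y psi_{x,L,tau}(y) (the minimizer is unique for L > 0) *)
Definition Tmap (F : 'rV[R]_n -> 'rV[R]_m) (L tau : R) (x : 'rV[R]_n)
  : 'rV[R]_n :=
  xget 0 [set y | forall z, psi F x L tau y <= psi F x L tau z].

Definition Delta (F : 'rV[R]_n -> 'rV[R]_m) (r : R) (x : 'rV[R]_n) : R :=
  f2 F x - inf [set phi F x y ^+ 2 | y in [set y | frob (y - x) <= r]].

(* Lst i  = value of L_i at the start of iteration i,
   Lacc i = value of L_i when the test in step (3) is passed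
            (obtained from Lst i by j doublings l := min(2l, 2 L_F)). *)
Definition scheme1 (F : 'rV[R]_n -> 'rV[R]_m) (LF L eps : R)
    (x : nat -> 'rV[R]_n) (Lacc Lst : nat -> R) (k : nat) : Prop :=
  Lst 0%N = L /\
  forall i : nat, (i < k)%N ->
    (exists j : nat,
          Lacc i = iter j (fun l => Num.min (2 * l) (2 * LF)) (Lst i)) /\
        0 < f1 F (x i) /\
        psi F (x i) (Lacc i) (f1 F (x i)) (x i.+1)
          - psi F (x i) (Lacc i) (f1 F (x i))
              (Tmap F (Lacc i) (f1 F (x i)) (x i)) <= eps /\
        psi F (x i) (Lacc i) (f1 F (x i)) (x i.+1) <= f1 F (x i) /\
        f1 F (x i.+1) <= psi F (x i) (Lacc i) (f1 F (x i)) (x i.+1) /\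
        Lst i.+1 = Num.max (Lacc i / 2) L.

End Defs.

Definition varkappa (R : realType) (t : R) : R :=
  if t <= 1 then t ^+ 2 / 2 else t - 1 / 2.

From HB Require Import structures.
From mathcomp Require Import all_boot all_order all_algebra.
From mathcomp Require Import all_classical all_reals all_analysis.
From mathcomp Require Import ring lra.
Import Order.TTheory GRing.Theory Num.Theory.
Import numFieldNormedType.Exports.
Local Open Scope classical_set_scope.
Local Open Scope ring_scope.
Set Implicit Arguments. Unset Strict Implicit. Unset Printing Implicit Defensive.

(* With tau = f1(x), the model psi_{x,L,tau} is a strongly convex quadratic in
   y, so T = T_{L,tau}(x) exists, is unique, and psi(T) + L/2 |y - T|^2 <= psi(y).
   The model decrease D(x) = f1(x) - psi_{x,2L_F,f1(x)}(T_{2L_F,f1(x)}(x)) controls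
   both stationarity measures: taking y = x gives L_F |T - x|^2 <= D(x), and
   comparing psi(T) with psi at the points x + t(y - x), |y - x| <= r, t in [0,1],
   gives 2(L_F r)^2 varkappa(Delta_r(x) / (4 f1(x) L_F r^2)) <= L_F D(x).
   Along Scheme 1 the accepted constant never exceeds 2L_F and psi is monotone
   in L, so D(x_i) <= f1(x_i) - f1(x_{i+1}) + eps; this telescopes, and the
   minimum over the first k iterates is at most the average. *)

Section RowDot.
Variable R : realType.

Definition dotr p (u v : 'rV[R]_p) : R := (u *m v^T) 0 0.
Definition sqnorm p (v : 'rV[R]_p) : R := dotr v v.

Lemma dotrE p (u v : 'rV[R]_p) : dotr u v = \sum_j u 0 j * v 0 j.
Proof. by rewrite /dotr mxE; apply: eq_bigr => j _; rewrite mxE. Qed.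

Lemma dotrC p (u v : 'rV[R]_p) : dotr u v = dotr v u.
Proof. by rewrite !dotrE; apply: eq_bigr => j _; rewrite mulrC. Qed.

Lemma dotrDl p (u v w : 'rV[R]_p) : dotr (u + v) w = dotr u w + dotr v w.
Proof. by rewrite !dotrE -big_split; apply: eq_bigr => j _; rewrite mxE mulrDl. Qed.

Lemma dotrDr p (u v w : 'rV[R]_p) : dotr w (u + v) = dotr w u + dotr w v.
Proof. by rewrite dotrC dotrDl !(dotrC w). Qed.

Lemma dotrZl p (c : R) (u w : 'rV[R]_p) : dotr (c *: u) w = c * dotr u w.
Proof. by rewrite !dotrE mulr_sumr; apply: eq_bigr => j _; rewrite mxE mulrA. Qed.

Lemma dotrZr p (c : R) (u w : 'rV[R]_p) : dotr w (c *: u) = c * dotr w u.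
Proof. by rewrite dotrC dotrZl dotrC. Qed.

Lemma dotr0l p (w : 'rV[R]_p) : dotr 0 w = 0.
Proof. by rewrite /dotr mul0mx mxE. Qed.

Lemma dotr_mulmx p q (w : 'rV[R]_q) (e : 'rV[R]_p) (J : 'M[R]_(p, q)) :
  dotr w (e *m J) = dotr (w *m J^T) e.
Proof. by rewrite /dotr trmx_mul mulmxA. Qed.

Lemma sqnormE p (v : 'rV[R]_p) : sqnorm v = \sum_j v 0 j ^+ 2.
Proof. by rewrite /sqnorm dotrE; apply: eq_bigr => j _; rewrite expr2. Qed.

Lemma sqnorm_ge0 p (v : 'rV[R]_p) : 0 <= sqnorm v.
Proof. by rewrite sqnormE sumr_ge0 // => j _; rewrite sqr_ge0. Qed.

Lemma sqnorm_le0 p (v : 'rV[R]_p) : sqnorm v <= 0 -> v = 0.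
Proof.
move=> v_le0; have : sqnorm v = 0 by apply/eqP; rewrite eq_le v_le0 sqnorm_ge0.
rewrite sqnormE => /psumr_eq0P v2_eq0; apply/matrixP => i j.
rewrite (ord1 i) !mxE; apply/eqP; rewrite -sqrf_eq0; apply/eqP.
by rewrite v2_eq0 // => l _; rewrite sqr_ge0.
Qed.

Lemma frob_rV p (v : 'rV[R]_p) : frob v = Num.sqrt (sqnorm v).
Proof. by rewrite /frob big_ord1 sqnormE. Qed.

Lemma frob_sqr p (v : 'rV[R]_p) : frob v ^+ 2 = sqnorm v.
Proof. by rewrite frob_rV sqr_sqrtr // sqnorm_ge0. Qed.

Lemma sqnorm0 p : sqnorm (0 : 'rV[R]_p) = 0.
Proof. by rewrite /sqnorm dotr0l. Qed.

Lemma sqnormD p (u v : 'rV[R]_p) :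
  sqnorm (u + v) = sqnorm u + 2 * dotr u v + sqnorm v.
Proof. rewrite /sqnorm dotrDl !dotrDr (dotrC v u); ring. Qed.

Lemma sqnormZ p (c : R) (v : 'rV[R]_p) : sqnorm (c *: v) = c ^+ 2 * sqnorm v.
Proof. rewrite /sqnorm dotrZl dotrZr; ring. Qed.

Lemma sqnormN p (v : 'rV[R]_p) : sqnorm (- v) = sqnorm v.
Proof. by rewrite -scaleN1r sqnormZ sqrrN expr1n mul1r. Qed.

Lemma sqnorm_convex p (a v : 'rV[R]_p) (t : R) : 0 <= t <= 1 ->
  sqnorm (a + t *: v) <= (1 - t) * sqnorm a + t * sqnorm (a + v).
Proof.
move=> /andP[t_ge0 t_le1]; rewrite !sqnormD sqnormZ dotrZr.
have : 0 <= t * (1 - t) by rewrite mulr_ge0 // subr_ge0.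
have := sqnorm_ge0 v; nra.
Qed.

End RowDot.

Section QuadraticModel.
Variables (R : realType) (n m : nat).
Variables (a : 'rV[R]_m) (J : 'M[R]_(n, m)) (tau M : R).
Hypotheses (tau_gt0 : 0 < tau) (M_gt0 : 0 < M).

Definition qmodel (d : 'rV[R]_n) : R :=
  sqnorm (a + d *m J) / (2 * tau) + M / 2 * sqnorm d.

Definition qmodel_hess : 'M[R]_n := tau^-1 *: (J *m J^T) + M%:M.

Lemma mulmx_qmodel_hess (v : 'rV[R]_n) :
  v *m qmodel_hess = tau^-1 *: (v *m J *m J^T) + M *: v.
Proof. by rewrite /qmodel_hess mulmxDr -scalemxAr mulmxA mul_mx_scalar. Qed.

Lemma qmodel_hess_unit : qmodel_hess \in unitmx.
Proof.
rewrite -row_free_unit -kermx_eq0; apply/eqP/row_matrixP => i; rewrite row0.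
set v := row i _; apply: sqnorm_le0.
have : dotr (v *m qmodel_hess) v = 0.
  by rewrite /v -row_mul mulmx_ker row0 dotr0l.
rewrite mulmx_qmodel_hess dotrDl !dotrZl -dotr_mulmx -/(sqnorm _) -/(sqnorm v).
rewrite -(pmulr_rle0 _ M_gt0).
have : 0 <= tau^-1 * sqnorm (v *m J) by rewrite mulr_ge0 ?invr_ge0 ?sqnorm_ge0 ?ltW.
lra.
Qed.

Definition qmodel_argmin : 'rV[R]_n :=
  - (tau^-1 *: (a *m J^T)) *m invmx qmodel_hess.

Lemma qmodel_argmin_stationary :
  tau^-1 *: ((a + qmodel_argmin *m J) *m J^T) + M *: qmodel_argmin = 0.
Proof.
have : qmodel_argmin *m qmodel_hess = - (tau^-1 *: (a *m J^T)).
  by rewrite /qmodel_argmin -mulmxA mulVmx ?qmodel_hess_unit // mulmx1.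
rewrite mulmx_qmodel_hess => H.
by rewrite mulmxDl scalerDr -addrA H addrN.
Qed.

Lemma qmodel_expand (d : 'rV[R]_n) : qmodel d =
  qmodel qmodel_argmin + sqnorm ((d - qmodel_argmin) *m J) / (2 * tau)
    + M / 2 * sqnorm (d - qmodel_argmin).
Proof.
set ds := qmodel_argmin; set e := d - ds.
have -> : d = ds + e by rewrite addrC subrK.
rewrite /qmodel mulmxDl addrA !sqnormD.
have := congr1 (fun w => dotr w e) qmodel_argmin_stationary.
rewrite dotr0l dotrDl !dotrZl -dotr_mulmx => stationary.
have tau_neq0 : tau != 0 by rewrite gt_eqF.
have -> : dotr (a + ds *m J) (e *m J) = - (tau * (M * dotr ds e)).
  by apply: (mulfI (invr_neq0 tau_neq0)); rewrite mulrN mulKf //; apply/eqP;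
     rewrite -addr_eq0 stationary.
by field.
Qed.

End QuadraticModel.

Section ModelMinimizer.
Variables (R : realType) (n m : nat) (F : 'rV[R]_n -> 'rV[R]_m).

Lemma psiE (x : 'rV[R]_n) (M tau : R) (y : 'rV[R]_n) :
  psi F x M tau y = tau / 2 + qmodel (Fhat F x) ('J (Fhat F) x) tau M (y - x).
Proof. by rewrite /psi /phi !frob_sqr /qmodel addrA. Qed.

Lemma psi_le_L (x : 'rV[R]_n) (L1 L2 tau : R) (y : 'rV[R]_n) :
  L1 <= L2 -> psi F x L1 tau y <= psi F x L2 tau y.
Proof.
move=> L12; rewrite /psi lerD2l ler_wpM2r ?sqr_ge0 //.
by rewrite ler_pM2r.
Qed.

Variables (x : 'rV[R]_n) (M tau : R).
Hypotheses (M_gt0 : 0 < M) (tau_gt0 : 0 < tau).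

Local Notation T := (Tmap F M tau x).
Local Notation J := ('J (Fhat F) x).
Let ystar := x + qmodel_argmin (Fhat F x) J tau M.

Let sqnorm_mulmx_div_ge0 (v : 'rV[R]_n) : 0 <= sqnorm (v *m J) / (2 * tau).
Proof. by rewrite divr_ge0 ?sqnorm_ge0 // mulr_ge0 // ltW. Qed.

Lemma psi_expand (y : 'rV[R]_n) : psi F x M tau y = psi F x M tau ystar
  + sqnorm ((y - ystar) *m J) / (2 * tau) + M / 2 * sqnorm (y - ystar).
Proof.
rewrite !psiE (qmodel_expand _ _ tau_gt0 M_gt0 (y - x)) /ystar.
by rewrite [x + _ - x]addrC addKr opprD !addrA.
Qed.

Lemma Tmap_ystar : T = ystar.
Proof.
have ystar_min z : psi F x M tau ystar <= psi F x M tau z.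
  rewrite (psi_expand z) -addrA lerDl addr_ge0 //.
  by rewrite mulr_ge0 ?sqnorm_ge0 // divr_ge0 // ltW.
have := xgetPex 0 (ex_intro
  (fun y => forall z, psi F x M tau y <= psi F x M tau z) ystar ystar_min).
rewrite -/T => T_min.
apply/eqP; rewrite -subr_eq0; apply/eqP/sqnorm_le0.
have := T_min ystar; rewrite (psi_expand T) -addrA gerDl.
have := sqnorm_mulmx_div_ge0 (T - ystar).
have : 0 < M / 2 by rewrite divr_gt0.
nra.
Qed.

Lemma psi_Tmap_growth (y : 'rV[R]_n) :
  psi F x M tau T + M / 2 * sqnorm (y - T) <= psi F x M tau y.
Proof.
by rewrite Tmap_ystar (psi_expand y) lerD2r lerDl sqnorm_mulmx_div_ge0.
Qed.

Lemma psi_Tmap_le (y : 'rV[R]_n) : psi F x M tau T <= psi F x M tau y.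
Proof.
apply: le_trans (psi_Tmap_growth y); rewrite lerDl mulr_ge0 ?sqnorm_ge0 //.
by rewrite divr_ge0 // ltW.
Qed.

End ModelMinimizer.

(* 2 b varkappa(u) is the maximum of 2 b u t - b t^2 over t in [0, 1]. *)
Lemma varkappa_le (R : realType) (b u d : R) : 0 <= u -> 0 <= d ->
  (forall t, 0 < t <= 1 -> 2 * b * u * t <= d + b * t ^+ 2) ->
  2 * b * varkappa u <= d.
Proof.
move=> u_ge0 d_ge0 H; rewrite /varkappa; case: ifP => [u_le1|/negbT].
- move: u_ge0; rewrite le_eqVlt => /predU1P[<-|u_gt0].
    by rewrite expr0n mul0r mulr0.
  by have := H u; rewrite u_gt0 u_le1 => /(_ isT); lra.
- by rewrite -ltNge => u_gt1; have := H 1; rewrite ltr01 lexx => /(_ isT); lra.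
Qed.

Section ModelDecrease.
Variables (R : realType) (n m : nat) (F : 'rV[R]_n -> 'rV[R]_m).

Definition model_decrease (LF : R) (z : 'rV[R]_n) : R :=
  f1 F z - psi F z (2 * LF) (f1 F z) (Tmap F (2 * LF) (f1 F z) z).

Variables (LF : R) (z : 'rV[R]_n).
Hypotheses (LF_gt0 : 0 < LF) (f1_gt0 : 0 < f1 F z).

Local Notation tau := (f1 F z).
Local Notation T := (Tmap F (2 * LF) tau z).
Local Notation D := (model_decrease LF z).
Local Notation a := (Fhat F z).
Local Notation J := ('J (Fhat F) z).

Let LF2_gt0 : 0 < 2 * LF. Proof. by rewrite mulr_gt0. Qed.

Lemma f2_sqnorm : f2 F z = sqnorm (Fhat F z).
Proof. by rewrite /f2 /f1 frob_sqr. Qed.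

Lemma psi_center (M : R) : psi F z M tau z = tau.
Proof.
rewrite /psi /phi subrr mul0mx addr0 [frob 0 ^+ 2]frob_sqr sqnorm0.
by rewrite -/(f1 F z); field; rewrite gt_eqF.
Qed.

Lemma sqnorm_step_le_model_decrease : LF * sqnorm (T - z) <= D.
Proof.
have := psi_Tmap_growth F z LF2_gt0 f1_gt0 z; rewrite psi_center.
rewrite -sqnormN opprB (_ : 2 * LF / 2 = LF) /model_decrease; last by field.
lra.
Qed.

Lemma frob_scaled_step_le_model_decrease :
  frob ((2 * LF) *: (T - z)) ^+ 2 <= 4 * LF * D.
Proof.
rewrite frob_sqr sqnormZ (_ : (2 * LF) ^+ 2 = 4 * LF * LF); last by ring.
rewrite -mulrA; apply: ler_wpM2l; first by rewrite mulr_ge0 // ltW.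
exact: sqnorm_step_le_model_decrease.
Qed.

Lemma model_decrease_ge0 : 0 <= D.
Proof.
apply: le_trans sqnorm_step_le_model_decrease.
by rewrite mulr_ge0 ?sqnorm_ge0 // ltW.
Qed.

Lemma model_decrease_segment (r : R) (y : 'rV[R]_n) (t : R) :
  frob (y - z) <= r -> 0 <= t <= 1 ->
  t * (f2 F z - phi F z y ^+ 2) <= 2 * tau * (D + LF * r ^+ 2 * t ^+ 2).
Proof.
move=> yz_le_r t01; rewrite /model_decrease /f2 /phi frob_sqr.
set e := y - z.
have tau2_gt0 : 0 < 2 * tau by rewrite mulr_gt0.
have T_le := psi_Tmap_le F z LF2_gt0 f1_gt0 (z + t *: e).
have psi_seg : 2 * tau * psi F z (2 * LF) tau (z + t *: e)
    = tau ^+ 2 + sqnorm (a + t *: (e *m J)) + 2 * tau * LF * t ^+ 2 * sqnorm e.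
  rewrite /psi /phi [frob (_ + _) ^+ 2]frob_sqr [frob (_ - _) ^+ 2]frob_sqr.
  rewrite [z + _ - z]addrC addKr -scalemxAl sqnormZ.
  by field; rewrite gt_eqF.
rewrite -(ler_pM2l tau2_gt0) psi_seg in T_le.
have convex := sqnorm_convex a (e *m J) t01.
rewrite -f2_sqnorm /f2 in convex.
have e_le_r : sqnorm e <= r ^+ 2.
  have frob_e_ge0 : 0 <= frob e by rewrite frob_rV sqrtr_ge0.
  by rewrite -frob_sqr !expr2 ler_pM.
have : tau * LF * t ^+ 2 * sqnorm e <= tau * LF * t ^+ 2 * r ^+ 2.
  by apply: (ler_wpM2l _ e_le_r); apply: mulr_ge0 (sqr_ge0 _); exact/ltW/mulr_gt0.
lra.
Qed.

Let ball_values (r : R) := [set phi F z y ^+ 2 | y in [set y | frob (y - z) <= r]].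

Let ball_values_lbound (r : R) : has_lbound (ball_values r).
Proof. by exists 0 => _ [y _ <-]; rewrite sqr_ge0. Qed.

Let center_in_ball (r : R) : 0 <= r -> ball_values r (tau ^+ 2).
Proof.
move=> r_ge0; exists z; last by rewrite /phi subrr mul0mx addr0.
by rewrite /= subrr frob_rV sqnorm0 sqrtr0.
Qed.

Lemma Delta_ge0 (r : R) : 0 <= r -> 0 <= Delta F r z.
Proof.
move=> r_ge0; rewrite /Delta subr_ge0.
by apply: (ge_inf (ball_values_lbound r)); apply: center_in_ball.
Qed.

Lemma Delta_le_model_decrease (r t : R) : 0 <= r -> 0 < t <= 1 ->
  t * Delta F r z <= 2 * tau * (D + LF * r ^+ 2 * t ^+ 2).
Proof.
move=> r_ge0 /andP[t_gt0 t_le1]; set K := 2 * tau * _.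
have : tau ^+ 2 - K / t <= inf (ball_values r).
  apply: lb_le_inf; first by exists (tau ^+ 2); apply: center_in_ball.
  move=> _ [y y_in <-]; rewrite lerBlDr -lerBlDl ler_pdivlMr // mulrC.
  by apply: model_decrease_segment => //; rewrite (ltW t_gt0) t_le1.
by rewrite /Delta -/(ball_values r) lerBlDr -lerBlDl ler_pdivlMr // mulrC.
Qed.

Lemma varkappa_Delta_le_model_decrease (r : R) : 0 < r ->
  2 * (LF * r) ^+ 2 * varkappa (Delta F r z / (4 * tau * LF * r ^+ 2))
    <= LF * D.
Proof.
move=> r_gt0; have r2_gt0 : 0 < r ^+ 2 by rewrite exprn_gt0.
have tau2_gt0 : 0 < 2 * tau by rewrite mulr_gt0.
rewrite (_ : 2 * (LF * r) ^+ 2 = LF * (2 * (LF * r ^+ 2))); last first.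
  by rewrite exprMn; ring.
rewrite -mulrA ler_pM2l //; apply: varkappa_le.
- by rewrite divr_ge0 ?Delta_ge0 ?ltW // !mulr_gt0.
- exact: model_decrease_ge0.
- move=> t t01; rewrite -(ler_pM2l tau2_gt0).
  have -> : 2 * tau * (2 * (LF * r ^+ 2) * (Delta F r z / (4 * tau * LF * r ^+ 2)) * t)
      = t * Delta F r z.
    by field; rewrite !gt_eqF.
  exact: Delta_le_model_decrease (ltW r_gt0) t01.
Qed.

End ModelDecrease.

Lemma bigmin_le_of_sum (R : realType) (G d : nat -> R) (c s : R) (k : nat) :
  (0 < k)%N -> \sum_(i < k) d i <= k%:R * s ->
  0 <= c -> (forall i, (i < k)%N -> G i <= c * d i) ->
  \big[Num.min/G 0%N]_(i < k) G i <= c * s.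
Proof.
move=> k_gt0 sum_le c_ge0 G_le; set g := \big[Num.min/_]_(i < k) _.
have k_pos : 0 < k%:R :> R by rewrite ltr0n.
rewrite -(ler_pM2l k_pos) mulrCA.
have -> : k%:R * g = \sum_(i < k) g by rewrite sumr_const card_ord mulr_natl.
apply: le_trans (_ : \sum_(i < k) G i <= _).
  by apply: ler_sum => i _; apply: (bigmin_inf i).
apply: le_trans (ler_wpM2l c_ge0 sum_le); rewrite mulr_sumr.
by apply: ler_sum => i _; apply: G_le.
Qed.

Lemma iter_double_clamp_bound (R : realType) (L LF l : R) j :
  0 < L -> L <= l <= 2 * LF ->
  L <= iter j (fun l => Num.min (2 * l) (2 * LF)) l <= 2 * LF.
Proof.
move=> L_gt0 l_bound; elim: j => [//|j] /=.
set it := iter j _ l => /andP[L_le le_LF]; clearbody it.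
by rewrite le_min ge_min lexx orbT !andbT; apply/andP; split; lra.
Qed.

Lemma halve_max_bound (R : realType) (L LF l : R) :
  0 < L -> L <= l <= 2 * LF -> L <= Num.max (l / 2) L <= 2 * LF.
Proof.
move=> L_gt0 /andP[L_le le_LF].
by rewrite le_max lexx orbT /= ge_max; apply/andP; split; lra.
Qed.

Section Scheme1.
Variables (R : realType) (n m : nat) (F : 'rV[R]_n -> 'rV[R]_m).
Variables (LF L eps : R) (x : nat -> 'rV[R]_n) (Lacc Lst : nat -> R) (k : nat).
Hypotheses (L_gt0 : 0 < L) (L_le_LF : L <= LF).
Hypothesis scheme : scheme1 F LF L eps x Lacc Lst k.

Lemma scheme1_Lst_bound i : (i <= k)%N -> L <= Lst i <= 2 * LF.
Proof.
have [Lst0 step] := scheme; elim: i => [|i IH] i_le_k.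
  rewrite Lst0 lexx /= mulr_natl mulr2n (le_trans L_le_LF) // lerDl.
  exact: le_trans (ltW L_gt0) L_le_LF.
have [[j Lacc_iter] [_ [_ [_ [_ ->]]]]] := step i i_le_k.
apply: halve_max_bound => //; rewrite Lacc_iter.
exact: iter_double_clamp_bound (IH (ltnW i_le_k)).
Qed.

Lemma scheme1_Lacc_bound i : (i < k)%N -> L <= Lacc i <= 2 * LF.
Proof.
move=> i_lt_k; have [_ step] := scheme; have [[j ->] _] := step i i_lt_k.
exact/iter_double_clamp_bound/scheme1_Lst_bound/ltnW.
Qed.

Lemma scheme1_f1_gt0 i : (i < k)%N -> 0 < f1 F (x i).
Proof. by have [_ step] := scheme; case/step => _ []. Qed.

Lemma scheme1_model_decrease_le i : (i < k)%N ->
  model_decrease F LF (x i) <= f1 F (x i) - f1 F (x i.+1) + eps.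
Proof.
move=> i_lt_k; have [_ step] := scheme.
have [_ [f1_gt0 [inexact [_ [accepted _]]]]] := step i i_lt_k.
have /andP[L_le_Lacc Lacc_le] := scheme1_Lacc_bound i_lt_k.
have := psi_Tmap_le F (x i) (lt_le_trans L_gt0 L_le_Lacc) f1_gt0
          (Tmap F (2 * LF) (f1 F (x i)) (x i)).
have := psi_le_L F (x i) (f1 F (x i)) (Tmap F (2 * LF) (f1 F (x i)) (x i)) Lacc_le.
rewrite /model_decrease; lra.
Qed.

Lemma scheme1_sum_model_decrease : (0 < k)%N ->
  \sum_(i < k) model_decrease F LF (x i)
    <= k%:R * (eps + (f1 F (x 0%N) - f1 F (x k)) / k%:R).
Proof.
move=> k_gt0; apply: le_trans (_ : \sum_(i < k) (f1 F (x i) - f1 F (x i.+1) + eps) <= _).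
  by apply: ler_sum => i _; apply: scheme1_model_decrease_le.
have telescope : \sum_(i < k) (f1 F (x i) - f1 F (x i.+1)) = f1 F (x 0%N) - f1 F (x k).
  rewrite -(big_mkord xpredT (fun i => f1 F (x i) - f1 F (x i.+1))) -[RHS]opprB.
  rewrite -(telescope_sumr (fun i => f1 F (x i)) (leq0n k)) -sumrN.
  by apply: eq_bigr => i _; rewrite opprB.
have kR_neq0 : k%:R != 0 :> R by rewrite pnatr_eq0 -lt0n.
rewrite big_split /= telescope sumr_const card_ord mulrDr mulrCA mulfV // mulr1.
by rewrite mulr_natl addrC.
Qed.

End Scheme1.

Theorem theorem1 (R : realType) (n m : nat)
  (F : 'rV[R]_n -> 'rV[R]_m) (Fset : set 'rV[R]_n) (LF L eps : R)
  (x : nat -> 'rV[R]_n) (Lacc Lst : nat -> R) (k : nat) (r : R) :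
  (* F smooth (we only use differentiability everywhere) *)
  (forall z, differentiable F z) ->
  (* Fset closed, convex, with nonempty interior *)
  closed Fset -> convex_set Fset -> (interior Fset !=set0) ->
  (* Assumption 1 *)
  (forall z, Fset z -> differentiable (Fhat F) z) ->
  (forall y z, Fset y -> Fset z ->
     frob ('J (Fhat F) y - 'J (Fhat F) z) <= LF * frob (y - z)) ->
  (* parameters of Scheme 1 *)
  0 < L -> L <= LF -> 0 <= eps ->
  (* level set of x_0 contained in Fset, and the sequence lies in Fset *)
  [set z | f1 F z <= f1 F (x 0%N)] `<=` Fset ->
  (forall i, (i <= k)%N -> Fset (x i)) ->
  (* {x_i} generated by Scheme 1 with tau_i = f1(x_i), eps_i = eps *)
  scheme1 F LF L eps x Lacc Lst k ->
  (0 < k)%N -> 0 < r ->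
  let s := eps + (f1 F (x 0%N) - f1 F (x k)) / k%:R in
  8 * LF ^+ 2 / L * s >=
    \big[Num.min/ frob ((2 * LF) *: (Tmap F (2 * LF) (f1 F (x 0%N)) (x 0%N) - x 0%N)) ^+ 2]_(i < k)
      frob ((2 * LF) *: (Tmap F (2 * LF) (f1 F (x i)) (x i) - x i)) ^+ 2
  /\
  LF * s >=
    \big[Num.min/ 2 * (LF * r) ^+ 2 *
                  varkappa (Delta F r (x 0%N) / (4 * f1 F (x 0%N) * LF * r ^+ 2))]_(i < k)
      (2 * (LF * r) ^+ 2 *
         varkappa (Delta F r (x i) / (4 * f1 F (x i) * LF * r ^+ 2))).
Proof.
(* Assumption 1 only guarantees that the line search of Scheme 1 terminates;
   the bounds use nothing but the acceptance tests recorded in [scheme1]. *)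
move=> _ _ _ _ _ _ L_gt0 L_le_LF _ _ _ scheme k_gt0 r_gt0 s.
have LF_gt0 : 0 < LF := lt_le_trans L_gt0 L_le_LF.
have f1_gt0 := scheme1_f1_gt0 scheme.
have sum_le := scheme1_sum_model_decrease L_gt0 L_le_LF scheme k_gt0.
have s_ge0 : 0 <= s.
  have k_pos : 0 < k%:R :> R by rewrite ltr0n.
  rewrite -(pmulr_rge0 _ k_pos); apply: le_trans sum_le.
  by apply: sumr_ge0 => i _; apply: model_decrease_ge0 (f1_gt0 _ (ltn_ord i)).
split.
- apply: le_trans (_ : 4 * LF * s <= _); last first.
    apply: (ler_wpM2r s_ge0); rewrite ler_pdivlMr //.
    have : LF * L <= LF * LF by rewrite ler_pM2l.
    nra.
  apply: (bigmin_le_of_sum (d := fun i => model_decrease F LF (x i))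
    (G := fun i => frob ((2 * LF) *: (Tmap F (2 * LF) (f1 F (x i)) (x i) - x i)) ^+ 2)
    k_gt0 sum_le); first by rewrite mulr_ge0 // ltW.
  move=> i i_lt_k; exact: frob_scaled_step_le_model_decrease LF_gt0 (f1_gt0 _ i_lt_k).
- apply: (bigmin_le_of_sum (d := fun i => model_decrease F LF (x i))
    (G := fun i => 2 * (LF * r) ^+ 2 *
       varkappa (Delta F r (x i) / (4 * f1 F (x i) * LF * r ^+ 2)))
    k_gt0 sum_le); first exact: ltW.
  move=> i i_lt_k.
  exact (varkappa_Delta_le_model_decrease LF_gt0 (f1_gt0 _ i_lt_k) r_gt0).
Qed.
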